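(* For $n\ge3$ and every integer $\ell$ with $0<\ell\le d-1$, one has $N(\ell)=0$.
   Context: Sylvester numbers: $s_0=2$, $s_{k+1}=1+\prod_{i=0}^ks_i$. Fix $n$, $d=\prod_{i=0}^ns_i$, $a_i=d/s_i$ for $0\le i\le n$, $a_{n+1}=1$. For $\ell\in\{0,\dots,d-1\}$ let $\tilde\theta_i(\ell)=\{\ell/s_i\}$ (fractional part) for $0\le i\le n$ and $\tilde\theta_{n+1}(\ell)=\ell/d$; $T_0(\ell)=\{i\in\{0,\dots,n+1\}:\tilde\theta_i(\ell)=0\}$, $T_1(\ell)=\{0,\dots,n+1\}\setminus T_0(\ell)$; $A(\ell)=\sum_{i\in T_1(\ell)}(\frac d2-a_i)$, $B(\ell)=\sum_{i\in T_1(\ell)}(d\tilde\theta_i(\ell)-\frac d2)$. $N(\ell)$ is the number of integer tuples $(k_i)_{i\in T_0(\ell)}$ with $0\le k_i\le s_i-2$ for $0\le i\le n$ and $0\le k_{n+1}\le d-2$ (if $n+1\in T_0(\ell)$), such that $A(\ell)+\sum_{i\in T_0(\ell)}k_ia_i=d$ and $B(\ell)=0$ (so $N(\ell)=0$ if $B(\ell)\ne0$). *)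

From HB Require Import structures.
From mathcomp Require Import all_boot all_order all_algebra.
Unset Printing Implicit Defensive.
Import Order.TTheory GRing.Theory Num.Theory.

Fixpoint sylv_prod (k : nat) : nat :=
  match k with
  | 0 => 2
  | k'.+1 => sylv_prod k' * (sylv_prod k').+1
  end.

Definition sylv (k : nat) : nat :=
  match k with
  | 0 => 2
  | k'.+1 => (sylv_prod k').+1
  end.

Lemma sylv_prodE k : sylv_prod k = \prod_(i < k.+1) sylv i.
Proof.
elim: k => [|k IH]; first by rewrite big_ord_recr big_ord0.
by rewrite big_ord_recr /= -IH.
Qed.

Lemma sylv0 : sylv 0 = 2. Proof. by []. Qed.
Lemma sylvS k : sylv k.+1 = (\prod_(i < k.+1) sylv i).+1.
Proof. by rewrite /= sylv_prodE. Qed.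

Local Open Scope ring_scope.

Definition dd (n : nat) : nat := \prod_(i < n.+1) sylv i.

(* indices 0..n+1 are 'I_(n.+2) *)
Definition aa (n : nat) (i : 'I_n.+2) : nat :=
  if (i <= n)%N then (dd n %/ sylv i)%N else 1%N.

Definition frac_rat (q : rat) : rat := q - (Num.floor q)%:~R.

Definition theta (n : nat) (l : nat) (i : 'I_n.+2) : rat :=
  if (i <= n)%N then frac_rat (l%:R / (sylv i)%:R) else l%:R / (dd n)%:R.

Definition T0 (n l : nat) : {set 'I_n.+2} := [set i | theta n l i == 0].
Definition T1 (n l : nat) : {set 'I_n.+2} := ~: T0 n l.

Definition AA (n l : nat) : rat :=
  \sum_(i in T1 n l) ((dd n)%:R / 2 - (aa n i)%:R).
Definition BB (n l : nat) : rat :=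
  \sum_(i in T1 n l) ((dd n)%:R * theta n l i - (dd n)%:R / 2).

Definition kbound (n : nat) (i : 'I_n.+2) : nat :=
  if (i <= n)%N then (sylv i - 2)%N else (dd n - 2)%N.

(* Tuples (k_i)_{i in T0} are encoded as functions on all indices vanishing
   outside T0; all admissible values are < d, so 'I_(dd n) suffices. *)
Definition Nset (n l : nat) : {set {ffun 'I_n.+2 -> 'I_(dd n)}} :=
  [set k : {ffun 'I_n.+2 -> 'I_(dd n)} | [forall i, (i \notin T0 n l) ==> (val (k i) == 0%N)]
        && [forall i, (i \in T0 n l) ==> (val (k i) <= kbound n i)%N]
        && (AA n l + \sum_(i in T0 n l) ((val (k i) * aa n i)%N)%:R == (dd n)%:R)
        && (BB n l == 0)].

Definition NN (n l : nat) : nat := #|Nset n l|.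

From mathcomp Require Import all_boot all_order all_algebra.
From mathcomp Require Import zify ring lra.
Import Order.TTheory GRing.Theory Num.Theory.

(* Fix 0 < i <= n.  The number d and every a_j with j <= n, j <> i, are
   multiples of s_i, a_{n+1} = 1, and a_i = -1 modulo s_i.  If i were in T0(l),
   twice the defining equation A + sum k_j a_j = d, reduced modulo the odd number
   s_i, would give s_i | k_i + 1, which 0 <= k_i <= s_i - 2 forbids.  Since also
   n+1 is not in T0(l) for l > 0, we get T0(l) within {0}; as d/2 - a_0 = 0 and
   the a_i sum to d, then A = n d / 2 > d, contradicting A <= d. *)

Lemma sylv_prod_gt0 n : 0 < sylv_prod n.
Proof. by elim: n => //= n IH; rewrite muln_gt0 IH. Qed.

Lemma sylv_gt1 i : 1 < sylv i.
Proof. by case: i => //= k; rewrite ltnS sylv_prod_gt0. Qed.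

Lemma sylv_dvd_prod i n : i <= n -> sylv i %| sylv_prod n.
Proof.
elim: n => [|n IH]; first by rewrite leqn0 => /eqP->.
rewrite leq_eqVlt => /orP[/eqP->|/IH i_dvd]; first exact: dvdn_mull.
exact: dvdn_mulr.
Qed.
Arguments sylv_dvd_prod {i n}.

Lemma coprime_sylv i j : i < j -> coprime (sylv i) (sylv j).
Proof.
by case: j => // j lt_ij; exact: coprime_dvdl (sylv_dvd_prod (n:=j) lt_ij) (coprimenS _).
Qed.

Lemma odd_sylv i : 0 < i -> odd (sylv i).
Proof. by case: i => // k _; rewrite /= -dvdn2 (sylv_dvd_prod (leq0n k)). Qed.

Lemma sylv_dvd_cofactor i j n :
  i <= n -> j <= n -> i != j -> sylv i %| sylv_prod n %/ sylv j.
Proof.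
move=> le_in le_jn neq_ij; have sj_dvd := sylv_dvd_prod le_jn.
rewrite dvdn_divRL // Gauss_dvd ?sj_dvd ?sylv_dvd_prod //.
case: (ltngtP i j) neq_ij => // lt_ij _; first exact: coprime_sylv.
by rewrite coprime_sym coprime_sylv.
Qed.

Lemma sylv_dvd_cofactorS i n : i <= n -> sylv i %| (sylv_prod n %/ sylv i).+1.
Proof.
elim: n => [|n IH]; first by rewrite leqn0 => /eqP->.
rewrite leq_eqVlt => /orP[/eqP->|lt_in]; first by rewrite /= mulnK.
rewrite /= -divn_mulAC ?sylv_dvd_prod //.
have -> : forall a b, (a * b.+1).+1 = a.+1 + a * b by move=> a b; lia.
by rewrite dvdn_add ?IH ?dvdn_mull ?sylv_dvd_prod.
Qed.

(* The Egyptian fraction identity 1/s_0 + ... + 1/s_n = 1 - 1/(s_0 ... s_n). *)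
Lemma sum_sylv_cofactor n :
  \sum_(i < n.+1) sylv_prod n %/ sylv i = (sylv_prod n).-1.
Proof.
elim: n => [|n IH]; first by rewrite big_ord1.
rewrite big_ord_recr /= mulnK //.
rewrite (eq_bigr (fun i : 'I_n.+1 => sylv_prod n %/ sylv i * (sylv_prod n).+1));
  last by move=> i _; rewrite divn_mulAC // sylv_dvd_prod // -ltnS.
rewrite -big_distrl /= IH.
by case: (sylv_prod n) (sylv_prod_gt0 n) => // p _; rewrite mulSn addnC.
Qed.

Lemma bigD1_dvdn (I : finType) (P : pred I) (F : I -> nat) i s :
  P i -> (forall j, P j -> j != i -> s %| F j) ->
  exists2 r, s %| r & \sum_(j | P j) F j = F i + r.
Proof.
move=> Pi dvd_F; rewrite (bigD1 i) //=; eexists; last reflexivity.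
by apply: dvdn_sum => j /andP[]; apply: dvd_F.
Qed.

Lemma dd_sylv_prod n : dd n = sylv_prod n.
Proof. by rewrite /dd sylv_prodE. Qed.

Lemma aa_cofactor n (i : 'I_n.+2) : i <= n -> aa n i = sylv_prod n %/ sylv i.
Proof. by move=> le_in; rewrite /aa le_in dd_sylv_prod. Qed.

Lemma aa_ord_max n : aa n ord_max = 1.
Proof. by rewrite /aa /= ltnn. Qed.

Lemma sum_aa n : \sum_i aa n i = dd n.
Proof.
rewrite big_ord_recr /= aa_ord_max dd_sylv_prod.
rewrite (eq_bigr (fun i : 'I_n.+1 => sylv_prod n %/ sylv i));
  last by move=> i _; rewrite aa_cofactor //= -ltnS.
by rewrite sum_sylv_cofactor addn1 prednK ?sylv_prod_gt0.
Qed.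

Section Solution.

Context {n l : nat} {k : {ffun 'I_n.+2 -> 'I_(dd n)}}.
Hypotheses (l_gt0 : 0 < l) (k_sol : k \in Nset n l).

Lemma ord_max_notin_T0 : ord_max \notin T0 n l.
Proof.
rewrite inE /theta /= ltnn mulf_eq0 invr_eq0 !pnatr_eq0 negb_or -!lt0n l_gt0.
by rewrite dd_sylv_prod sylv_prod_gt0.
Qed.

Lemma T0_le {i} : i \in T0 n l -> i <= n.
Proof.
move=> iT0; have : i != ord_max by apply: contraNneq ord_max_notin_T0 => <-.
by case: i {iT0} => i lt_i; rewrite -val_eqE /=; lia.
Qed.

Local Notation K := (\sum_(i in T0 n l) val (k i) * aa n i).
Local Notation SA := (\sum_(j in T1 n l) aa n j).

Lemma Nset_kbound {i} : i \in T0 n l -> val (k i) <= kbound n i.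
Proof. by move: k_sol; rewrite inE => /andP[/andP[/andP[_ /forallP/(_ i)/implyP]]]. Qed.

Lemma Nset_AA : (AA n l + K%:R = (dd n)%:R)%R.
Proof. by move: k_sol; rewrite inE natr_sum => /andP[/andP[_ /eqP]]. Qed.

Lemma Nset_nat_eq : #|T1 n l| * dd n + 2 * K = 2 * dd n + 2 * SA.
Proof.
have AA_E : (AA n l = (dd n)%:R / 2 * #|T1 n l|%:R - SA%:R)%R.
  by rewrite /AA sumrB sumr_const natr_sum mulr_natr.
apply/eqP; rewrite -(eqr_nat rat) !natrD !natrM; apply/eqP.
by move: Nset_AA; rewrite AA_E; lra.
Qed.

Lemma Nset_T0_ord0 i : i \in T0 n l -> i = ord0.
Proof.
move=> iT0; apply: val_inj => /=; apply/eqP; rewrite eqn0Ngt; apply/negP => i_gt0.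
have le_in := T0_le iT0.
set s := sylv i; set ki := val (k i).
have s_dvd_aa (j : 'I_n.+2) : j <= n -> j != i -> s %| aa n j.
  by move=> le_jn ne_ji; rewrite aa_cofactor // sylv_dvd_cofactor // eq_sym.
have [K' s_dvd_K' K_E] : exists2 r, s %| r & K = ki * aa n i + r.
  apply: bigD1_dvdn => // j jT0 ne_ji.
  by rewrite dvdn_mull // s_dvd_aa ?T0_le.
have [S' s_dvd_S' SA_E] : exists2 r, s %| r & SA = aa n ord_max + r.
  apply: bigD1_dvdn => [|j jT1 ne_jmax]; first by rewrite inE ord_max_notin_T0.
  apply: s_dvd_aa; last by apply: contraTneq jT1 => ->; rewrite inE iT0.
  by case: j ne_jmax {jT1} => j lt_j; rewrite -val_eqE /=; lia.
have s_dvd_dd : s %| dd n by rewrite dd_sylv_prod sylv_dvd_prod.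
have s_dvd_aaS : s %| (aa n i).+1 by rewrite aa_cofactor // sylv_dvd_cofactorS.
have ki_le : ki <= s - 2 by have := Nset_kbound iT0; rewrite /kbound le_in.
have E := Nset_nat_eq; rewrite K_E SA_E aa_ord_max in E.
have E' : #|T1 n l| * dd n + 2 * K' + 2 * ki * (aa n i).+1
           = 2 * dd n + 2 * S' + 2 * ki.+1 by nia.
have : s %| 2 * ki.+1.
  have s_dvd_rhs : s %| 2 * dd n + 2 * S' by rewrite dvdn_add ?dvdn_mull.
  by rewrite -(dvdn_addr _ s_dvd_rhs) -E' !dvdn_add ?dvdn_mull.
rewrite Gauss_dvdr ?coprimen2 ?odd_sylv // => /dvdn_leq.
by have := sylv_gt1 i; rewrite -/s; lia.
Qed.

End Solution.

Lemma AA_T0_sub_ord0 n l :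
  T0 n l \subset [set ord0] -> (AA n l = n%:R * (dd n)%:R / 2 :> rat)%R.
Proof.
move=> T0_sub; pose F i := ((dd n)%:R / 2 - (aa n i)%:R : rat)%R.
have F_ord0 : F ord0 = 0%R.
  by rewrite /F aa_cofactor // natf_div ?dd_sylv_prod ?subrr // (sylv_dvd_prod (leq0n n)).
have sum_F : (\sum_i F i = n%:R * (dd n)%:R / 2)%R.
  rewrite sumrB sumr_const card_ord -natr_sum sum_aa -mulr_natr -addn2 natrD.
  by field.
rewrite -sum_F (bigID (mem (T0 n l))) /= big1 ?add0r => [|i iT0]; last first.
  by have := subsetP T0_sub i iT0; rewrite inE => /eqP->.
by apply: eq_bigl => i; rewrite in_setC.
Qed.

Theorem lemma6p8 (n : nat) (hn : (3 <= n)%N) (l : nat)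
  (hl0 : (0 < l)%N) (hl1 : (l <= dd n - 1)%N) : NN n l = 0%N.
Proof.
apply/eqP; rewrite cards_eq0; apply: contraT => /set0Pn[k k_sol].
have T0_sub : T0 n l \subset [set ord0].
  by apply/subsetP => i /(Nset_T0_ord0 hl0 k_sol) ->; rewrite inE.
have := Nset_AA k_sol; rewrite AA_T0_sub_ord0 //.
have dd_gt0 : (0 < (dd n)%:R :> rat)%R by rewrite ltr0n dd_sylv_prod sylv_prod_gt0.
have n_ge3 : (3 <= n%:R :> rat)%R by rewrite ler_nat.
have := ler0n rat (\sum_(i in T0 n l) val (k i) * aa n i); nra.
Qed.
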